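(* There is a $T$-family on $\mathbb N$. More precisely, for every $0<\varepsilon<1$ there are a partition $\mathbb N=\bigcup_n I_n$ into nonempty finite pieces $I_n$ and a pre-compact family $\mathcal F$ on $\mathbb N$ such that: (a) $\mathcal F$ is not $4$-large in any infinite $M\subseteq\mathbb N$; (b) $\mathcal G_{1-\varepsilon}(\mathcal F)=\mathcal G_+(\mathcal F)=\mathfrak S$, where $\mathfrak S=\{s\subseteq\mathbb N:\#s=\min s\}$ is the Schreier barrier; (c) for every $s\in\mathcal F$ one has $s\cap I_n=I_n$, where $n$ is the least $m$ with $s\cap I_m\neq\emptyset$.
   Context: A family on $J$ is a collection of finite subsets of $J$; it is pre-compact if every set in its closure in $2^J$ (product topology) is finite. A family $\mathcal H$ is $n$-large in $J$ if for every infinite $K\subseteq J$ there is $s\in\mathcal H$ with $\#(s\cap K)\ge n$, and large in $J$ if it is $n$-large for every $n$. For finite $s\subseteq\mathbb N$ and $0<\lambda<1$: $s[\lambda]=\{n:\#(s\cap I_n)\ge\lambda\#I_n\}$, $s[+]=\{n:s\cap I_n\ne\emptyset\}$, $\mathcal G_\lambda(\mathcal F)=\{s[\lambda]:s\in\mathcal F\}$, $\mathcal G_+(\mathcal F)=\{s[+]:s\in\mathcal F\}$. A pre-compact family $\mathcal F$ on a set $I$ partitioned into finite pieces $(I_n)_n$ is a $T$-family if it is not large in any infinite $J\subseteq I$ and there is $0<\lambda\le1$ such that $\mathcal G_\lambda(\mathcal F)$ is large in $\mathbb N$. *)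

From HB Require Import structures.
From mathcomp Require Import all_boot all_order all_algebra.
From mathcomp Require Import finmap.
From mathcomp Require Import reals.
Set Implicit Arguments. Unset Strict Implicit. Unset Printing Implicit Defensive.
Import Order.TTheory GRing.Theory Num.Theory.

Local Open Scope fset_scope.

Definition nfamily := {fset nat} -> Prop.

Definition subset_nat := nat -> bool.

Definition infinite_set (K : subset_nat) : Prop :=
  forall N : nat, exists k, (N <= k)%N /\ K k.

Definition subset_of (K J : subset_nat) : Prop := forall k, K k -> J k.

(* x lies in the closure of F in 2^N (product topology): every basic
   neighbourhood {y | y agrees with x below n} meets F. *)
Definition in_closure (F : nfamily) (x : subset_nat) : Prop :=
  forall n : nat, exists s, F s /\ forall k, (k < n)%N -> (k \in s) = x k.

Definition precompact (F : nfamily) : Prop :=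
  forall x, in_closure F x -> exists N : nat, forall k, x k -> (k < N)%N.

Definition card_inter (s : {fset nat}) (K : subset_nat) : nat :=
  #|` [fset k in s | K k] |.

Definition n_large (F : nfamily) (J : subset_nat) (n : nat) : Prop :=
  forall K : subset_nat, subset_of K J -> infinite_set K ->
    exists s, F s /\ (n <= card_inter s K)%N.

Definition partition_nat (I : nat -> {fset nat}) : Prop :=
  (forall n, I n != fset0) /\
  (forall n m, n <> m -> I n `&` I m = fset0) /\
  (forall k, exists n, k \in I n).

Definition is_s_lambda (R : realType) (I : nat -> {fset nat}) (lam : R)
    (s t : {fset nat}) : Prop :=
  forall n, n \in t <-> (lam * (#|` I n|)%:R <= (#|` s `&` I n|)%:R)%R.

Definition is_s_plus (I : nat -> {fset nat}) (s t : {fset nat}) : Prop :=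
  forall n, n \in t <-> s `&` I n != fset0.

Definition G_lambda (R : realType) (I : nat -> {fset nat}) (lam : R)
    (F : nfamily) : nfamily :=
  fun t => exists s, F s /\ is_s_lambda I lam s t.

Definition G_plus (I : nat -> {fset nat}) (F : nfamily) : nfamily :=
  fun t => exists s, F s /\ is_s_plus I s t.

Definition schreier : nfamily :=
  fun s => exists m, m \in s /\ (forall k, k \in s -> (m <= k)%N) /\ #|` s| = m.

Definition same_family (F G : nfamily) : Prop := forall s, F s <-> G s.

(* Fix K > 2 with eps K >= 1. The piece I_d consists of the codes of the functions
   f : {0, ..., d-1} -> {0, ..., K^(2d) - 1}. A Schreier set t, with a := #t = min t,
   is sent to the set of codes, in the pieces d in t, of the f without a hole: no
   x < y < d in t with f x = f y mod K^(2a+1). As K^(2a+1) divides K^(2d), each pair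
   x < y excludes a fraction 1/K^(2a+1) of I_d, so at most a^2/K^(2a+1) <= 1/K <= eps
   of I_d is lost and the pieces met are exactly those in t; this gives (b). The
   piece min t has no pair below it and is kept whole, which gives (c). A point of
   the closure meeting the piece p meets at most p pieces, hence is finite. For (a),
   choose codes f_d in an infinite M and thin the pieces out by a Ramsey argument
   until f_d x mod K^(2e+1) does not depend on x for e < x < d: four chosen codes
   f_e1, ..., f_e4 in one set would then give f_e4 a hole at e2 < e3, because
   K^(2a+1) divides K^(2 e1 + 1). *)

From HB Require Import structures.
From mathcomp Require Import all_boot all_order all_algebra.
From mathcomp Require Import finmap.
From mathcomp Require Import reals.
From mathcomp Require Import zify lra.
From Stdlib Require Import Classical ClassicalEpsilon.
Set Implicit Arguments. Unset Strict Implicit. Unset Printing Implicit Defensive.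
Import Order.TTheory GRing.Theory Num.Theory.

Section CongruentPairs.
Variables (A : finType) (q m : nat) (i j : A).
Hypotheses (neq_ij : i != j) (m_gt0 : 0 < m) (m_dvd_q : m %| q).

(* As m divides q, [shift] adds 1 to [gap f], the residue of f j - f i modulo m;
   hence (f, r) |-> shift^r f is injective on congruent f and r < m. *)
Let shift (f : {ffun A -> 'I_q}) : {ffun A -> 'I_q} :=
  [ffun x => if x == j then ordS (f x) else f x].
Let gap (f : {ffun A -> 'I_q}) := (f j + (m - f i %% m)) %% m.

Let shift_inj : injective shift.
Proof.
move=> f g /ffunP fg; apply/ffunP => x; move: (fg x); rewrite !ffunE.
by case: (x == j) => //; apply: ordS_inj.
Qed.

Let gap_shift f : gap (shift f) = (gap f).+1 %% m.
Proof.
rewrite /gap !ffunE eqxx (negbTE neq_ij) /=.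
rewrite -[in LHS]modnDml (modn_dvdm _ m_dvd_q) modnDml -[in RHS]addn1 modnDml.
by congr (_ %% m); lia.
Qed.

Let gap_iter r f : gap (iter r shift f) = (gap f + r) %% m.
Proof.
elim: r => [|r IH] /=; first by rewrite addn0 /gap modn_mod.
by rewrite gap_shift IH -addn1 modnDml addn1 addnS.
Qed.

Let gap_eq0 f : (gap f == 0) = (f i %% m == f j %% m).
Proof.
have := ltn_pmod (f i) m_gt0; have := ltn_pmod (f j) m_gt0.
rewrite /gap -modnDml; set u := f i %% m; set w := f j %% m => w_lt u_lt.
case: (leqP u w) => [u_le|w_lt_u].
- rewrite (_ : w + (m - u) = w - u + m); last by lia.
  by rewrite modnDr modn_small; apply/eqP/eqP; lia.
- by rewrite modn_small; apply/eqP/eqP; lia.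
Qed.

Lemma card_congruent_pair :
  m * #|[set f : {ffun A -> 'I_q} | f i %% m == f j %% m]| <= #|{ffun A -> 'I_q}|.
Proof.
set C := [set f | _].
rewrite -[m]card_ord mulnC -cardsT -cardsX.
apply: (@leq_card_in _ _ (fun p : {ffun A -> 'I_q} * 'I_m => iter p.2 shift p.1)).
move=> [f r] [g r']; rewrite !inE /= !andbT => Cf Cg fg.
have := congr1 gap fg; rewrite !gap_iter.
move: Cf Cg; rewrite -!gap_eq0 => /eqP-> /eqP->; rewrite !add0n !modn_small //.
move=> /val_inj rr'; subst r'; congr pair.
by elim: (val r) fg => //= n IH /shift_inj.
Qed.

End CongruentPairs.

Lemma card_has_le (T : finType) (X : eqType) (P : X -> pred T) (s : seq X) m b :
  (forall x, x \in s -> m * #|[set f | P x f]| <= b) ->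
  m * #|[set f | has (P^~ f) s]| <= size s * b.
Proof.
elim: s => [|x s IH] P_le.
  by rewrite (_ : [set f | _] = set0) ?cards0 ?muln0 //; apply/setP => f; rewrite !inE.
rewrite (_ : [set f | _] = [set f | P x f] :|: [set f | has (P^~ f) s]); last first.
  by apply/setP => f; rewrite !inE.
apply: leq_trans (leq_mul (leqnn m) (leq_card_setU _ _).1) _.
rewrite mulnDr mulSn leq_add ?P_le ?mem_head // IH // => y ys.
by rewrite P_le // in_cons ys orbT.
Qed.

Definition unbounded (S : nat -> Prop) := forall N, exists2 k, N <= k & S k.

Lemma unbounded_ge S N : unbounded S -> unbounded (fun x => S x /\ N <= x).
Proof.
move=> S_unb N'; have [k k_ge Sk] := S_unb (maxn N N').
by exists k; [|split]; rewrite // geq_max in k_ge; case/andP: k_ge.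
Qed.

Lemma unbounded_pigeonhole m S (h : nat -> nat) : unbounded S ->
  (forall x, S x -> h x < m) -> exists v, unbounded (fun x => S x /\ h x = v).
Proof.
elim: m S => [|m IH] S S_unb h_lt; first by have [x _ /h_lt] := S_unb 0.
have [|m_bounded] := classic (unbounded (fun x => S x /\ h x = m)); first by exists m.
have [N N_bound] : exists N, forall x, N <= x -> S x -> h x != m.
  apply: NNPP => no_bound; apply: m_bounded => N; apply: NNPP => no_x.
  apply: no_bound; exists N => x Nx Sx; apply/eqP => hx; apply: no_x; by exists x.
have [|v v_unb] := IH (fun x => S x /\ N <= x) (unbounded_ge N S_unb).
  by move=> x [Sx Nx]; have := N_bound x Nx Sx; have := h_lt x Sx; lia.
by exists v => N'; have [x x_ge [[Sx _] hx]] := v_unb N'; exists x.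
Qed.

Definition homogeneous_chain (Hom : nat -> (nat -> Prop) -> Prop) (S : nat -> Prop)
    (a : nat -> nat) :=
  [/\ forall i, S (a i), forall i, a i < a i.+1 &
      forall i, Hom (a i) (fun x => exists2 k, i < k & x = a k)].

Section Diagonal.
Variable Hom : nat -> (nat -> Prop) -> Prop.
Hypothesis Hom_sub : forall a S S', Hom a S -> (forall x, S' x -> S x) -> Hom a S'.
Hypothesis Hom_step : forall S, unbounded S -> exists2 a, S a &
  exists S', [/\ unbounded S', forall x, S' x -> S x /\ a < x & Hom a S'].

Let good (S : nat -> Prop) (p : nat * (nat -> Prop)) :=
  [/\ S p.1, unbounded p.2, forall x, p.2 x -> S x /\ p.1 < x & Hom p.1 p.2].
Let step S := epsilon (inhabits (0, S)) (good S).

Let step_good S : unbounded S -> good S (step S).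
Proof.
move=> /Hom_step [a Sa [S' [S'_unb S'_sub homS']]].
by apply: epsilon_spec; exists (a, S').
Qed.

Variable S0 : nat -> Prop.
Hypothesis S0_unb : unbounded S0.

Let stage i := iter i (fun p => step p.2) (step S0).

Let stage_good i : good (if i is i'.+1 then (stage i').2 else S0) (stage i).
Proof. by elim: i => [|i [_ unb _ _]]; apply: step_good. Qed.

Let stage_sub i k x : i <= k -> (stage k).2 x -> (stage i).2 x.
Proof.
elim: k => [|k IH]; first by rewrite leqn0 => /eqP->.
rewrite leq_eqVlt => /orP[/eqP-> //|/IH ki kx]; apply: ki.
by have [_ _ sub _] := stage_good k.+1; case: (sub x kx).
Qed.

Let stage_later i k : i < k -> (stage i).2 (stage k).1.
Proof.
case: k => // k; rewrite ltnS => ik; apply: (stage_sub ik).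
by have [] := stage_good k.+1.
Qed.

Lemma diagonal_sequence : exists a, homogeneous_chain Hom S0 a.
Proof.
exists (fun i => (stage i).1); split.
- move=> [|i]; first by have [] := stage_good 0.
  have [_ _ sub0 _] := stage_good 0.
  exact: (sub0 _ (stage_sub (leq0n i) (stage_later (ltnSn i)))).1.
- move=> i; have [_ _ sub _] := stage_good i.
  by case: (sub _ (stage_later (ltnSn i))).
- move=> i; have [_ _ _ homi] := stage_good i.
  by apply: Hom_sub homi _ => x [k ik ->]; apply: stage_later.
Qed.

End Diagonal.

Lemma increasing_ge (a : nat -> nat) : (forall i, a i < a i.+1) -> forall i, i <= a i.
Proof. by move=> a_incr; elim=> // i IH; apply: leq_ltn_trans IH (a_incr i). Qed.

Lemma increasing_lt (a : nat -> nat) : (forall i, a i < a i.+1) ->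
  forall i k, (a i < a k) = (i < k).
Proof.
move=> a_incr i k; have a_mono : {homo a : x y / x < y} by apply: homo_ltn ltn_trans _.
by rewrite !ltnNge (leq_mono a_mono).
Qed.

Lemma unbounded_step_gt S : unbounded S -> exists2 a, S a & unbounded (fun x => S x /\ a < x).
Proof.
by move=> S_unb; have [a _ Sa] := S_unb 0; exists a => //; apply: unbounded_ge.
Qed.

Lemma ramsey_pairs m (c : nat -> nat -> nat) S : unbounded S -> (forall e d, c e d < m) ->
  exists R, [/\ unbounded R, forall x, R x -> S x &
    exists v, forall e d, R e -> R d -> e < d -> c e d = v].
Proof.
move=> S_unb c_lt.
pose Hom a (S' : nat -> Prop) := exists v, forall d, S' d -> c a d = v.
have [a [aS a_incr a_hom]] : exists a, homogeneous_chain Hom S a.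
  apply: diagonal_sequence S_unb.
- by move=> a S1 S' [v hv] sub; exists v => d /sub; apply: hv.
- move=> S1 /unbounded_step_gt [a S1a S1_unb]; exists a => //.
  have [v v_unb] := unbounded_pigeonhole S1_unb (fun x _ => c_lt a x).
  exists (fun x => (S1 x /\ a < x) /\ c a x = v); split=> //; first by move=> x [].
  by exists v => d [].
have [v v_unb] := unbounded_pigeonhole (h := fun i => c (a i) (a i.+1))
  (fun N => ex_intro2 _ _ N (leqnn N) I) (fun i _ => c_lt _ _).
exists (fun x => exists2 i, c (a i) (a i.+1) = v & x = a i); split.
- move=> N; have [i Ni [_ hi]] := v_unb N; exists (a i); last by exists i.
  exact: leq_trans Ni (increasing_ge a_incr i).
- by move=> x [i _ ->].
exists v => _ _ [i hi ->] [k _ ->]; rewrite increasing_lt // => ik.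
have [w hw] := a_hom i.
rewrite -hi (hw (a k)); last by exists k.
by rewrite (hw (a i.+1)) //; exists i.+1.
Qed.

Lemma ramsey_middle_independent (bound : nat -> nat) (c : nat -> nat -> nat -> nat) S :
  unbounded S -> (forall j e d, c j e d < bound j) ->
  exists J, [/\ unbounded J, forall x, J x -> S x &
    forall e1 e2 e3 d, J e1 -> J e2 -> J e3 -> J d -> e1 < e2 -> e2 < e3 -> e3 < d ->
      c e1 e2 d = c e1 e3 d].
Proof.
move=> S_unb c_lt.
pose Hom j (S' : nat -> Prop) :=
  exists v, forall e d, S' e -> S' d -> e < d -> c j e d = v.
have [a [aS a_incr a_hom]] : exists a, homogeneous_chain Hom S a.
  apply: diagonal_sequence S_unb.
- by move=> j S1 S' [v hv] sub; exists v => e d /sub Se /sub Sd; apply: hv.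
- move=> S1 /unbounded_step_gt [a S1a S1_unb]; exists a => //.
  have [R [R_unb R_sub hom]] := ramsey_pairs S1_unb (c_lt a).
  by exists R; split=> // x /R_sub.
exists (fun x => exists i, x = a i); split.
- by move=> N; exists (a N); [apply: increasing_ge | exists N].
- by move=> x [i ->].
move=> _ _ _ _ [i ->] [k ->] [l ->] [r ->]; rewrite !increasing_lt // => ik kl lr.
have [w hw] := a_hom i.
have tail x : i < x -> exists2 y, i < y & a x = a y by exists x.
by rewrite (hw (a k) (a r)) 1?(hw (a l) (a r)) ?increasing_lt //; try apply: tail; lia.
Qed.

Lemma natB_ge_frac (R : realFieldType) (eps : R) (k n h : nat) :
  (0 < eps)%R -> (1 <= eps * k%:R)%R -> k * h <= n ->
  ((1 - eps) * n%:R <= (n - h)%:R)%R.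
Proof.
move=> eps_gt0 eps_k kh_le.
have k_gt0 : 0 < k by move: eps_k; case: (k) => [|//]; rewrite mulr0 ler10.
have h_le : h <= n by apply: leq_trans kh_le; rewrite leq_pmull.
have kh_leR : (k%:R * h%:R <= n%:R :> R)%R by rewrite -natrM ler_nat.
have h_leR : (h%:R <= eps * n%:R :> R)%R.
  apply: le_trans (_ : eps * (k%:R * h%:R) <= _)%R; last by rewrite ler_wpM2l // ltW.
  by rewrite mulrA -[X in (X <= _)%R]mul1r ler_wpM2r.
rewrite natrB //; lra.
Qed.

Local Open Scope fset_scope.
Local Open Scope nat_scope.

Lemma unbounded_count (P : pred nat) : unbounded P -> forall c, exists B, c <= count P (iota 0 B).
Proof.
move=> P_unb; elim=> [|c [B cB]]; first by exists 0.
have [d Bd Pd] := P_unb B; exists d.+1.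
rewrite (_ : d.+1 = B + (d.+1 - B)); last by lia.
rewrite iotaD count_cat add0n -addn1 leq_add // -has_count.
by apply/hasP; exists d; rewrite // mem_iota; lia.
Qed.

Lemma four_increasing (X : {fset nat}) : 4 <= #|`X| -> exists k1 k2 k3 k4,
  [/\ k1 \in X, k2 \in X, k3 \in X & k4 \in X] /\ [/\ k1 < k2, k2 < k3 & k3 < k4].
Proof.
move=> X_ge; set s := sort leq X.
have s_lt : sorted ltn s.
  by rewrite ltn_sorted_uniq_leq sort_uniq fset_uniq sort_sorted //; exact: leq_total.
have s_size : 4 <= size s by rewrite size_sort.
have s_mem i : i < size s -> nth 0 s i \in X by move=> /(mem_nth 0); rewrite mem_sort.
have s_inc i j : i < j < size s -> nth 0 s i < nth 0 s j.
  have s_hom := sorted_ltn_nth ltn_trans 0 s_lt.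
  by move=> /andP[ij js]; apply: s_hom; rewrite ?inE // (ltn_trans ij js).
exists (nth 0 s 0), (nth 0 s 1), (nth 0 s 2), (nth 0 s 3).
by split; split; first [apply: s_mem | apply: s_inc]; lia.
Qed.

Lemma schreier_card_le (t : {fset nat}) : schreier t -> forall e, e \in t -> #|`t| <= e.
Proof. by case=> a [_ [amin ->]] e /amin. Qed.

Section Construction.
Variable K : nat.
Hypothesis K_gt2 : 2 < K.

Let K_gt0 : 0 < K. Proof. exact: ltn_trans K_gt2. Qed.

Definition width d := K ^ (d + d).
Notation code d := {ffun 'I_d -> 'I_(width d)}.

Fixpoint offset d := if d is d'.+1 then offset d' + #|code d'| else 0.
Definition enc d (f : code d) := offset d + enum_rank f.
Definition piece d : {fset nat} := [fset enc f | f in {: code d}].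

Lemma width_gt0 d : 0 < width d.
Proof. by rewrite expn_gt0 K_gt0. Qed.

Lemma card_code_gt0 d : 0 < #|code d|.
Proof. by apply/card_gt0P; exists [ffun=> Ordinal (width_gt0 d)]. Qed.

Lemma offset_ge d : d <= offset d.
Proof. by elim: d => //= d IH; have := card_code_gt0 d; lia. Qed.

Lemma offset_mono : {homo offset : d d' / d < d'}.
Proof. by apply: homo_ltn ltn_trans _ => d /=; have := card_code_gt0 d; lia. Qed.

Lemma enc_inj d : injective (@enc d).
Proof. by move=> f g /addnI /val_inj /enum_rank_inj. Qed.

Lemma in_piece d k : (k \in piece d) = (offset d <= k < offset d.+1).
Proof.
apply/imfsetP/idP => [[f _ ->]|/andP[k_ge k_lt]].
  by rewrite /enc leq_addr /= ltn_add2l ltn_ord.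
have k_rank : k - offset d < #|code d| by move: k_lt => /=; lia.
by exists (enum_val (Ordinal k_rank)); rewrite // /enc enum_valK /=; lia.
Qed.

Lemma piece_le d d' k k' : k \in piece d -> k' \in piece d' -> k <= k' -> d <= d'.
Proof.
rewrite !in_piece => /andP[k_ge _] /andP[_ k'_lt] kk'.
by rewrite leqNgt; apply/negP => /(ltnW_homo offset_mono); lia.
Qed.

Lemma piece_uniq d d' k : k \in piece d -> k \in piece d' -> d = d'.
Proof. by move=> kd kd'; apply/eqP; rewrite eqn_leq !(piece_le kd kd', piece_le kd' kd). Qed.

Lemma piece_ltn d B k : k \in piece d -> d < B -> k < offset B.
Proof. by rewrite in_piece => /andP[_ k_lt] /(ltnW_homo offset_mono); lia. Qed.

Lemma piece_cover k : exists d, k \in piece d.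
Proof.
have [d k_lt d_min] := ex_minnP (ex_intro (fun d => k < offset d) k.+1 (offset_ge k.+1)).
case: d k_lt d_min => [//|d] k_lt d_min; exists d; rewrite in_piece k_lt andbT.
by rewrite leqNgt; apply/negP => /d_min; lia.
Qed.

Lemma card_piece d : #|`piece d| = #|code d|.
Proof. by rewrite card_imfset //= ?cardE //; apply: enc_inj. Qed.

Lemma partition_pieces : partition_nat piece.
Proof.
split; [|split]; last exact: piece_cover.
- by move=> d; rewrite -cardfs_gt0 card_piece card_code_gt0.
- move=> d d' dd'; apply/fsetP => k; rewrite in_fsetI in_fset0.
  by apply/negbTE/andP => -[/piece_uniq kd /kd].
Qed.

Definition code_at d (f : code d) e := if insub e is Some o then nat_of_ord (f o) else 0.
Definition modulus a := K ^ (a + a).+1.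

Lemma modulus_gt0 a : 0 < modulus a.
Proof. by rewrite expn_gt0 K_gt0. Qed.

Definition collision m d (f : code d) x y :=
  [&& x < y, y < d & code_at f x %% m == code_at f y %% m].
Definition hole (t : {fset nat}) d (f : code d) :=
  has (fun x => has (collision (modulus #|`t|) f x) t) t.

Lemma code_at_ord d (f : code d) (o : 'I_d) : code_at f o = f o.
Proof. by rewrite /code_at valK. Qed.

Lemma card_collision a d x y : a <= x ->
  modulus a * #|[set f : code d | collision (modulus a) f x y]| <= #|code d|.
Proof.
move=> a_le_x; have [xy_d|] := boolP ((x < y) && (y < d)); last first.
  move=> xy_d; rewrite (_ : [set f | _] = set0) ?cards0 ?muln0 //.
  by apply/setP => f; rewrite !inE /collision; case: (x < y) (y < d) xy_d => [] [].
have [x_lt_y y_lt_d] := andP xy_d; have x_lt_d := ltn_trans x_lt_y y_lt_d.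
have neq_xy : Ordinal x_lt_d != Ordinal y_lt_d by rewrite -val_eqE /= ltn_eqF.
have m_dvd : modulus a %| width d by rewrite dvdn_exp2l //; lia.
apply: leq_trans _ (card_congruent_pair neq_xy (modulus_gt0 a) m_dvd).
apply/eq_leq; congr (_ * _); apply: eq_card => f.
by rewrite !inE /collision x_lt_y y_lt_d -!code_at_ord.
Qed.

Lemma card_hole_small t d : (forall e, e \in t -> #|`t| <= e) ->
  K * #|[set f : code d | hole t f]| <= #|code d|.
Proof.
move=> t_ge; set a := #|`t|; set H := #|_|.
have holes_le : modulus a * H <= a * (a * #|code d|).
  apply: card_has_le => x xt; apply: card_has_le => y _.
  exact: card_collision (t_ge x xt).
have a_le : a <= K ^ a by apply: ltnW; apply: ltn_expl; lia.
have : K ^ (a + a) * (K * H) <= K ^ (a + a) * #|code d|.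
  rewrite mulnA -expnSr (leq_trans holes_le) // mulnA expnD leq_mul2r.
  by rewrite leq_mul ?orbT.
by rewrite leq_pmul2l // expn_gt0 K_gt0.
Qed.

Lemma hole_none t d (f : code d) : (forall e, e \in t -> d <= e) -> ~~ hole t f.
Proof.
move=> t_ge; apply/hasPn => x xt; apply/hasPn => y yt.
by rewrite /collision [y < d]ltnNge t_ge // andbF.
Qed.

Definition kept t d : {fset nat} := [fset enc f | f in [set f : code d | ~~ hole t f]].
Definition build (t : {fset nat}) := \bigcup_(d <- t) kept t d.

Lemma kept_sub t d : kept t d `<=` piece d.
Proof. by apply/fsubsetP => _ /imfsetP [f _ ->]; apply/imfsetP; exists f. Qed.

Lemma build_piece t n : build t `&` piece n = if n \in t then kept t n else fset0.
Proof.
apply/fsetP => k; rewrite in_fsetI; apply/andP/idP => [[/bigfcupP [d /andP[dt _] kd] kn]|].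
  have dn := piece_uniq (fsubsetP (kept_sub t d) k kd) kn; subst d.
  by rewrite dt.
case: ifP => [nt kn|_]; last by rewrite in_fset0.
split; first by apply/bigfcupP; exists n; rewrite ?nt.
exact: fsubsetP (kept_sub t n) k kn.
Qed.

Lemma card_kept t d : #|`kept t d| = #|code d| - #|[set f : code d | hole t f]|.
Proof.
rewrite card_imfset /=; last exact: enc_inj.
rewrite -cardE (cardsCs [set f | ~~ hole t f]); congr (_ - _).
by apply: eq_card => f; rewrite !inE negbK.
Qed.

Lemma enc_piece d (f : code d) : enc f \in piece d.
Proof. exact: in_imfset. Qed.

Lemma mem_kept t d (f : code d) : (enc f \in kept t d) = ~~ hole t f.
Proof. by rewrite mem_imfset ?inE //; apply: enc_inj. Qed.

Lemma build_piece_mem t d k : k \in build t -> k \in piece d -> d \in t.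
Proof.
move=> kt kd; have := in_fsetI (build t) (piece d) k; rewrite kt kd build_piece.
by case: (d \in t); rewrite ?in_fset0.
Qed.

Lemma mem_build_enc t d (f : code d) : enc f \in build t -> d \in t /\ ~~ hole t f.
Proof.
move=> ft; have dt := build_piece_mem ft (enc_piece f); split=> //.
by have := in_fsetI (build t) (piece d) (enc f); rewrite ft enc_piece build_piece dt mem_kept.
Qed.

Lemma kept_neq0 t d : schreier t -> kept t d != fset0.
Proof.
move=> st; rewrite -cardfs_gt0 card_kept subn_gt0.
have := card_hole_small d (schreier_card_le st); have := card_code_gt0 d.
nia.
Qed.

Lemma kept_full t d : (forall e, e \in t -> d <= e) -> kept t d = piece d.
Proof.
move=> t_ge; apply/fsetP => k; apply/imfsetP/imfsetP => -[f _ ->]; exists f => //.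
by rewrite inE hole_none.
Qed.

Definition Tfamily : nfamily := fun s => exists t, schreier t /\ s = build t.

Lemma same_family_recover (C : {fset nat} -> nat -> Prop) :
  (forall t n, schreier t -> n \in t <-> C (build t) n) ->
  same_family (fun u => exists s, Tfamily s /\ forall n, n \in u <-> C s n) schreier.
Proof.
move=> recover u; split=> [[_ [[t [st ->]] Cu]]|su].
  suff -> : u = t by [].
  apply/fsetP => n; apply/idP/idP => [/Cu /recover|/recover /Cu]; exact.
by exists (build u); split; [exists u | move=> n; apply: recover].
Qed.

Lemma mem_build_plus t n : schreier t -> n \in t <-> build t `&` piece n != fset0.
Proof.
rewrite build_piece => st; case: ifP => nt; last by rewrite eqxx.
by split=> // _; apply: kept_neq0.
Qed.

Lemma mem_build_lambda (R : realFieldType) (eps : R) t n :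
  (0 < eps)%R -> (eps < 1)%R -> (1 <= eps * K%:R)%R -> schreier t ->
  n \in t <-> ((1 - eps) * #|`piece n|%:R <= #|`build t `&` piece n|%:R)%R.
Proof.
move=> eps_gt0 eps_lt1 eps_K st; rewrite build_piece card_piece.
case: ifP => nt; split=> //.
  move=> _; rewrite card_kept; apply: natB_ge_frac eps_gt0 eps_K _.
  exact: card_hole_small (schreier_card_le st).
by rewrite cardfs0 lt_geF // mulr_gt0 ?subr_gt0 ?ltr0n ?card_code_gt0.
Qed.

Lemma build_first_piece t n : schreier t -> build t `&` piece n != fset0 ->
  (forall m, m < n -> build t `&` piece m = fset0) -> build t `&` piece n = piece n.
Proof.
move=> st /(mem_build_plus n st) nt before.
rewrite build_piece nt kept_full // => e et; rewrite leqNgt; apply/negP => en.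
by move: (before e en); apply/eqP; apply/(mem_build_plus e st).
Qed.

Lemma unbounded_pieces (x : subset_nat) : infinite_set x -> unbounded (fun d => has x (piece d)).
Proof.
move=> x_inf B; have [k [k_ge xk]] := x_inf (offset B); have [d kd] := piece_cover k.
exists d; last by apply/hasP; exists k.
by rewrite leqNgt; apply/negP => /(piece_ltn kd); lia.
Qed.

Lemma precompact_Tfamily : precompact Tfamily.
Proof.
move=> x x_cl; apply: NNPP => x_bnd.
have x_inf : infinite_set x.
  move=> N; apply: NNPP => no_k; apply: x_bnd; exists N => k xk.
  by rewrite ltnNge; apply/negP => Nk; apply: no_k; exists k.
have [k0 [_ xk0]] := x_inf 0; have [p k0p] := piece_cover k0.
have [B countB] := unbounded_count (unbounded_pieces x_inf) p.+1.
have [_ [[t [st ->]] agree]] := x_cl (offset B).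
have met_in_t : {subset filter (fun d => has x (piece d)) (iota 0 B) <= t}.
  move=> d; rewrite mem_filter mem_iota /= => /andP[/hasP [k kd xk] dB].
  by apply: (build_piece_mem _ kd); rewrite agree // (piece_ltn kd dB).
have p_lt_B : p < B by have := leq_trans countB (count_size _ _); rewrite size_iota.
have pt : p \in t.
  apply: met_in_t; rewrite mem_filter mem_iota leq0n add0n p_lt_B !andbT.
  by apply/hasP; exists k0.
have := uniq_leq_size (filter_uniq _ (iota_uniq 0 B)) met_in_t.
by rewrite size_filter => /(leq_trans countB); rewrite ltnNge (schreier_card_le st pt).
Qed.

Lemma enc_lt_family (fd : forall d, code d) e e' : enc (fd e) < enc (fd e') -> e < e'.
Proof.
move=> lt_ee'; have := piece_le (enc_piece (fd e)) (enc_piece (fd e')) (ltnW lt_ee').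
by rewrite leq_eqVlt => /orP[/eqP ee'|//]; subst e'; rewrite ltnn in lt_ee'.
Qed.

Lemma hole_of_collision t d (f : code d) e1 e2 e3 :
  e2 \in t -> e3 \in t -> e2 < e3 -> e3 < d -> #|`t| <= e1 ->
  code_at f e2 %% modulus e1 = code_at f e3 %% modulus e1 -> hole t f.
Proof.
move=> e2t e3t e23 e3d t_le collide.
have dvd : modulus #|`t| %| modulus e1 by rewrite dvdn_exp2l // ltnS leq_add.
apply/hasP; exists e2 => //; apply/hasP; exists e3 => //.
by rewrite /collision e23 e3d -(modn_dvdm (code_at f e2) dvd) collide (modn_dvdm _ dvd) eqxx.
Qed.

Lemma not_4_large M : infinite_set M -> ~ n_large Tfamily M 4.
Proof.
move=> M_inf M_large.
pose fd d : code d := odflt [ffun=> Ordinal (width_gt0 d)] [pick f | M (enc f)].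
have fd_M d : has M (piece d) -> M (enc (fd d)).
  by case/hasP => _ /imfsetP [f _ ->] Mf; rewrite /fd; case: pickP => [//|/(_ f)]; rewrite Mf.
have [J [J_unb J_meets J_mid]] := ramsey_middle_independent
  (c := fun j e d => code_at (fd d) e %% modulus j)
  (unbounded_pieces M_inf) (fun j e d => ltn_pmod _ (modulus_gt0 j)).
pose K0 : subset_nat := fun k =>
  if excluded_middle_informative (exists2 d, J d & k = enc (fd d)) then true else false.
have K0P k : K0 k <-> exists2 d, J d & k = enc (fd d).
  by rewrite /K0; case: excluded_middle_informative.
have K0_sub : subset_of K0 M by move=> k /K0P [d /J_meets /fd_M Md ->].
have K0_inf : infinite_set K0.
  move=> N; have [d Nd Jd] := J_unb N; exists (enc (fd d)); split; last by apply/K0P; exists d.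
  by apply: leq_trans Nd (leq_trans (offset_ge d) (leq_addr _ _)).
have [_ [[t [st ->]] four_le]] := M_large K0 K0_sub K0_inf.
have decode k : k \in [fset k in build t | K0 k] ->
    exists2 e, J e & [/\ e \in t, ~~ hole t (fd e) & k = enc (fd e)].
  rewrite !inE => /andP[kt /K0P [e Je ke]]; subst k.
  by have [et no_hole] := mem_build_enc kt; exists e.
have [k1 [k2 [k3 [k4 [[/decode [e1 J1 [t1 _ ->]] /decode [e2 J2 [t2 _ ->]]
  /decode [e3 J3 [t3 _ ->]] /decode [e4 J4 [_ no_hole ->]]]
  [/enc_lt_family e12 /enc_lt_family e23 /enc_lt_family e34]]]]]] := four_increasing four_le.
apply: (negP no_hole); apply: (hole_of_collision t2 t3 e23 e34 (schreier_card_le st t1)).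
exact: J_mid.
Qed.

End Construction.

Lemma exists_nat_gt2_mul_ge1 (R : archiFieldType) (eps : R) : (0 < eps)%R ->
  exists K, 2 < K /\ (1 <= eps * K%:R)%R.
Proof.
move=> eps_gt0; pose K := maxn 3 (Num.bound eps^-1).
exists K; split; first by rewrite leq_max.
have inv_ge0 : (0 <= eps^-1)%R by rewrite invr_ge0 ltW.
have inv_lt := archi_boundP inv_ge0.
rewrite -[X in (X <= _)%R](mulfV (lt0r_neq0 eps_gt0)) ler_pM2l //.
by apply: le_trans (ltW inv_lt) _; rewrite ler_nat leq_max leqnn orbT.
Qed.

Theorem theorem4p6 (R : realType) (eps : R) :
  (0 < eps)%R -> (eps < 1)%R ->
  exists (I : nat -> {fset nat}) (F : nfamily),
    partition_nat I /\
    precompact F /\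
    (forall M : subset_nat, infinite_set M -> ~ n_large F M 4) /\
    same_family (G_lambda I (1 - eps)%R F) schreier /\
    same_family (G_plus I F) schreier /\
    (forall s, F s -> forall n, s `&` I n != fset0 ->
        (forall m, (m < n)%N -> s `&` I m = fset0) ->
        s `&` I n = I n).
Proof.
move=> eps_gt0 eps_lt1; have [K [K_gt2 eps_K]] := exists_nat_gt2_mul_ge1 eps_gt0.
exists (piece K), (Tfamily K); split; first exact: partition_pieces.
split; first exact: precompact_Tfamily.
split; first exact: not_4_large.
split; first by apply: same_family_recover => t n st; apply: mem_build_lambda.
split; first by apply: same_family_recover => t n st; apply: mem_build_plus.
by move=> _ [t [st ->]] n; apply: build_first_piece.
Qed.
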